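(* Let $\Psi$ map $\bar t\in S^*$ to $\Psi(\bar t)=\{(\bar t\circ a)\restriction n:\ n\in\omega,\ a \text{ an assignment}\}$. Then for every $\bar t\in S^*$, $\Psi(\bar t)$ is a perfect subtree of $2^{<\omega}$; $\Psi$ is surjective onto Sacks forcing; $\Psi$ preserves $\le$; and $\Psi$ preserves incompatibility. In particular $\Psi$ is a surjective complete embedding of $S^*$ into Sacks forcing.
   Context: Terms. Fix a set $X$ of variable symbols, each taking values in $\{0,1\}$. An $X$-term $t$ is given by a finite sequence of variables $(v_0,\dots,v_{l-1})$ ($l\ge0$) and a function $f:2^l\to2$; a variable $v$ is identified with the term $((v),\mathrm{id})$. An assignment is a function $a:X\to2$; it extends to terms by $t\circ a=f(v_0\circ a,\dots,v_{l-1}\circ a)$. A substitution $\phi$ maps each variable to an $X$-term; $t\circ\phi$ is the term obtained by replacing each variable $v$ in $t$ by $\phi(v)$, and for a family $\bar t=(t_i)$ of terms, $\bar t\circ\phi=(t_i\circ\phi)$; for a family $\bar t=(t_i)$, $\bar t\circ a=(t_i\circ a)$. Terms are identified modulo $t=^*s$ iff $t\circ a=s\circ a$ for all assignments $a$; all equalities of terms are meant modulo $=^*$. A term depends only on variables in $Y\subseteq X$ if it is $=^*$ to a term using only variables from $Y$. A term or variable $s$ is determined by terms $t_0,\dots,t_n$ if for all assignments $a,b$, $(t_i\circ a)_{i\le n}=(t_i\circ b)_{i\le n}$ implies $s\circ a=s\circ b$. Here $X=\{x_j:j\in\omega\}$. $S^*$ is the set of sequences $\bar t=(t_i)_{i\in\omega}$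 of terms such that (1) $t_i$ depends only on the variables $x_j$ with $j\le i$, and (2) each $x_j$ is determined by finitely many $t_i$. An element $\phi\in S^*$ is regarded as the substitution $x_i\mapsto\phi_i$. The order: $\bar t'\le\bar t$ iff there is $\phi\in S^*$ with $\bar t'=\bar t\circ\phi$. Sacks forcing is the set of perfect subtrees of $2^{<\omega}$ ordered by inclusion. *)

From mathcomp Require Import all_boot.
Set Implicit Arguments. Unset Strict Implicit. Unset Printing Implicit Defensive.

(** Variables are x_j, represented by j : nat. An assignment a : X -> 2. *)
Definition assignment := nat -> bool.

(** An X-term: a finite sequence of variables (v_0,...,v_{l-1}) and a
    function f : 2^l -> 2, here given on sequences of booleans (only its
    values on sequences of length l = size tvars matter). *)
Record term := Term { tvars : seq nat; tfun : seq bool -> bool }.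

Definition tvar (v : nat) : term := Term [:: v] (fun bs => head false bs).

Definition teval (t : term) (a : assignment) : bool := tfun t (map a (tvars t)).

Definition teq (t s : term) : Prop := forall a, teval t a = teval s a.

Definition tsubst (t : term) (phi : nat -> term) : term :=
  let vs := tvars t in
  Term (flatten [seq tvars (phi v) | v <- vs])
       (fun bs => tfun t [seq tfun (phi p.1) p.2
                         | p <- zip vs (reshape [seq size (tvars (phi v)) | v <- vs] bs)]).

Definition depends_only (t : term) (Y : nat -> Prop) : Prop :=
  exists s, (forall v, v \in tvars s -> Y v) /\ teq t s.

Definition determined_by (j : nat) (ts : nat -> term) (F : seq nat) : Prop :=
  forall a b : assignment,
    (forall i, i \in F -> teval (ts i) a = teval (ts i) b) -> a j = b j.

Definition in_Sstar (ts : nat -> term) : Prop :=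
  (forall i, depends_only (ts i) (fun j => j <= i)) /\
  (forall j, exists F : seq nat, determined_by j ts F).

Definition Sstar_le (ts' ts : nat -> term) : Prop :=
  exists phi, in_Sstar phi /\ forall i, teq (ts' i) (tsubst (ts i) phi).

Definition Sstar_incompatible (ts1 ts2 : nat -> term) : Prop :=
  ~ exists r, in_Sstar r /\ Sstar_le r ts1 /\ Sstar_le r ts2.

Definition btree := seq bool -> Prop.

Definition is_tree (T : btree) : Prop :=
  (exists s, T s) /\ (forall s n, T s -> T (take n s)).

Definition perfect_tree (T : btree) : Prop :=
  is_tree T /\
  forall s, T s -> exists u, T (s ++ u ++ [:: false]) /\ T (s ++ u ++ [:: true]).

Definition Sacks_le (T' T : btree) : Prop := forall s, T' s -> T s.

Definition Sacks_incompatible (T1 T2 : btree) : Prop :=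
  ~ exists T, perfect_tree T /\ Sacks_le T T1 /\ Sacks_le T T2.

Definition restr_eval (ts : nat -> term) (a : assignment) (n : nat) : seq bool :=
  [seq teval (ts i) a | i <- iota 0 n].

Definition Psi (ts : nat -> term) : btree :=
  fun s => exists (n : nat) (a : assignment), s = restr_eval ts a n.

(* [Psi ts] is perfect because flipping [x_n] must change some [ts i] (as [x_n]
   is determined by the [ts i]); the first such [i] is at least [n] and gives a
   splitting node above any node of length [n].  Conversely, a perfect tree [T]
   is [Psi] of the terms "the [i]-th bit of the branch of [T] that reads the
   bits of the assignment, one at a time, at its splitting nodes".  Delaying
   the reading of [x_c] until [x_c] is determined by the first levels of given
   [ts] and [ts'] turns a common perfect subtree of [Psi ts] and [Psi ts'] into
   a common extension of [ts] and [ts'], so [Psi] preserves incompatibility. *)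

From mathcomp Require Import all_boot.
From Stdlib Require Import ClassicalEpsilon.
Set Implicit Arguments. Unset Strict Implicit. Unset Printing Implicit Defensive.

Definition depends_below (f : assignment -> bool) (i : nat) : Prop :=
  forall a b : assignment, (forall k, k <= i -> a k = b k) -> f a = f b.

Definition term_of_fun (i : nat) (f : assignment -> bool) : term :=
  Term (iota 0 i.+1) (fun bs => f (nth false bs)).

Lemma teval_term_of_fun i f a : depends_below f i -> teval (term_of_fun i f) a = f a.
Proof.
move=> fi; apply: fi => k ki.
by rewrite (nth_map 0) ?size_iota ?nth_iota ?ltnS.
Qed.

Lemma term_of_fun_depends i f : depends_only (term_of_fun i f) (fun j => j <= i).
Proof. by exists (term_of_fun i f); split=> // v; rewrite mem_iota add0n ltnS. Qed.

Lemma teval_depends t i a b : depends_only t (fun j => j <= i) ->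
  (forall k, k <= i -> a k = b k) -> teval t a = teval t b.
Proof.
move=> [s [sY ts]] ab; rewrite !ts /teval; congr (tfun s _).
by apply/eq_in_map => v /sY; apply: ab.
Qed.

Lemma teval_tsubst t phi a : teval (tsubst t phi) a = teval t (fun v => teval (phi v) a).
Proof.
rewrite /teval /=; congr (tfun t _).
elim: (tvars t) => //= v vs IH.
by rewrite map_cat -(size_map a) take_size_cat // drop_size_cat //= IH.
Qed.

Lemma size_restr_eval ts a n : size (restr_eval ts a n) = n.
Proof. by rewrite size_map size_iota. Qed.

Lemma restr_evalS ts a n :
  restr_eval ts a n.+1 = rcons (restr_eval ts a n) (teval (ts n) a).
Proof. by rewrite /restr_eval -addn1 iotaD map_cat cats1. Qed.

Lemma take_restr_eval ts a n m : take m (restr_eval ts a n) = restr_eval ts a (minn m n).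
Proof. by rewrite /restr_eval -map_take take_iota. Qed.

Lemma restr_eval_eqP ts ts' a b n : restr_eval ts a n = restr_eval ts' b n <->
  (forall i, i < n -> teval (ts i) a = teval (ts' i) b).
Proof.
split=> [E i lt|E]; last by apply/eq_in_map => i; rewrite mem_iota add0n => /E.
have := congr1 (nth false ^~ i) E.
by rewrite /restr_eval !(nth_map 0) ?size_iota // nth_iota.
Qed.

Lemma Psi_tree ts : is_tree (Psi ts).
Proof.
split; first by exists [::], 0, (fun _ => false).
by move=> _ m [n [a ->]]; exists (minn m n), a; rewrite take_restr_eval.
Qed.

Lemma Psi_perfect ts : in_Sstar ts -> perfect_tree (Psi ts).
Proof.
move=> [ts_dep ts_det]; split; first exact: Psi_tree.
move=> _ [n [a ->]].
pose a' : assignment := fun k => if k == n then ~~ a n else a k.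
have separated : exists i, teval (ts i) a != teval (ts i) a'.
  have [F detF] := ts_det n.
  suff /hasP[i _ sep] : has (fun i => teval (ts i) a != teval (ts i) a') F by exists i.
  apply: contraT => /hasPn same.
  have := detF a a' (fun i Fi => eqP (negbNE (same i Fi))).
  by rewrite /a' eqxx; case: (a n).
case: (ex_minnP separated) => i sep_i min_i.
have agree k : k < i -> teval (ts k) a = teval (ts k) a'.
  by move=> lt; apply/eqP/negPn/negP => /min_i; rewrite leqNgt lt.
have le_ni : n <= i.
  rewrite leqNgt; apply/negP => lt; move/eqP: sep_i; apply.
  apply: teval_depends (ts_dep i) _ => k ki.
  by rewrite /a' ifN // neq_ltn (leq_ltn_trans ki lt).
have prefix : restr_eval ts a i = restr_eval ts a n ++ drop n (restr_eval ts a i).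
  by rewrite -{1}(cat_take_drop n (restr_eval ts a i)) take_restr_eval (minn_idPl le_ni).
have child_a : Psi ts (rcons (restr_eval ts a i) (teval (ts i) a)).
  by exists i.+1, a; rewrite restr_evalS.
have child_a' : Psi ts (rcons (restr_eval ts a i) (teval (ts i) a')).
  by exists i.+1, a'; rewrite restr_evalS; congr rcons; apply/restr_eval_eqP.
exists (drop n (restr_eval ts a i)); rewrite !catA -prefix !cats1.
by move: sep_i child_a child_a'; case: (teval _ a); case: (teval _ a').
Qed.

Lemma Psi_mono ts ts' : Sstar_le ts' ts -> Sacks_le (Psi ts') (Psi ts).
Proof.
move=> [phi [_ ts'E]] _ [n [a ->]]; exists n, (fun v => teval (phi v) a).
by apply/restr_eval_eqP => i _; rewrite ts'E teval_tsubst.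
Qed.

Definition holds (P : Prop) : bool := if excluded_middle_informative P then true else false.

Lemma holdsP P : reflect P (holds P).
Proof. by rewrite /holds; case: excluded_middle_informative => h; constructor. Qed.

Section Walk.
Variables (T : btree) (H : nat -> nat).
Hypothesis T_perfect : perfect_tree T.

Definition splitting (s : seq bool) : bool :=
  holds (T (rcons s false)) && holds (T (rcons s true)).

(* A state is the current node together with the number of bits of the
   assignment consumed so far.  The [c]-th bit is consumed at the first
   splitting node of depth at least [H c]; elsewhere the walk takes the
   [true] child if it is in [T]. *)
Definition ready (p : seq bool * nat) : bool := splitting p.1 && (H p.2 <= size p.1).

Definition next_bit (a : assignment) (p : seq bool * nat) : bool :=
  if ready p then a p.2 else holds (T (rcons p.1 true)).

Fixpoint walk (a : assignment) (i : nat) : seq bool * nat :=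
  if i is i'.+1 then
    let p := walk a i' in (rcons p.1 (next_bit a p), p.2 + ready p)
  else ([::], 0).

Definition node a i := (walk a i).1.
Definition used a i := (walk a i).2.
Definition bit a i := next_bit a (walk a i).

Lemma nodeS a i : node a i.+1 = rcons (node a i) (bit a i).
Proof. by []. Qed.

Lemma usedS a i : used a i.+1 = used a i + ready (walk a i).
Proof. by []. Qed.

Lemma size_node a i : size (node a i) = i.
Proof. by elim: i => //= i IH; rewrite size_rcons IH. Qed.

Lemma readyE a i : ready (walk a i) = splitting (node a i) && (H (used a i) <= i).
Proof. by rewrite /ready size_node. Qed.

Lemma node_map a n : node a n = [seq bit a i | i <- iota 0 n].
Proof. by elim: n => // n IH; rewrite nodeS -addn1 iotaD map_cat cats1 -IH. Qed.

Lemma used_mono a : {homo used a : i j / i <= j}.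
Proof. by apply: (@homo_leq _ _ leq leqnn leq_trans) => i; rewrite usedS leq_addr. Qed.

Lemma used_le a i : used a i <= i.
Proof. by elim: i => // i IH; rewrite usedS -addn1 leq_add // leq_b1. Qed.

Lemma walk_depends a b i : (forall k, k < used a i -> a k = b k) -> walk a i = walk b i.
Proof.
elim: i => // i IH ab.
have {IH}Ei : walk a i = walk b i.
  by apply: IH => k lt; apply: ab; apply: leq_trans lt (used_mono a (leqnSn i)).
rewrite /= -Ei /next_bit; case R: (ready _) => //; congr (rcons _ _, _).
by apply: ab; rewrite usedS R addn1.
Qed.

Lemma bit_depends i : depends_below (bit^~ i) i.
Proof.
move=> a b ab; suff: node a i.+1 = node b i.+1 by rewrite !nodeS => /rcons_inj[].
rewrite /node (walk_depends (b := b)) // => k lt; apply: ab.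
by rewrite -ltnS (leq_trans lt (used_le a _)).
Qed.

Lemma node_eq_agree a b i : node a i = node b i ->
  used a i = used b i /\ (forall k, k < used a i -> a k = b k).
Proof.
elim: i => // i IH; rewrite !nodeS => /rcons_inj[Ep Eb].
have [Eu Ea] := IH Ep.
have Ew : walk a i = walk b i.
  by rewrite [walk a i]surjective_pairing [walk b i]surjective_pairing; congr pair.
move: Eb; rewrite !usedS /bit /next_bit -Ew -Eu; case: ifP => /= _ Eab; last by rewrite addn0.
split=> // k; rewrite addn1 ltnS leq_eqVlt => /predU1P[-> //|]; exact: Ea.
Qed.

Lemma tree_take s n : T s -> T (take n s).
Proof. by case: T_perfect => -[_ take_closed] _; apply: take_closed. Qed.

Lemma tree_prefix s u : T (s ++ u) -> T s.
Proof. by move/(tree_take (size s)); rewrite take_size_cat. Qed.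

Lemma tree_nil : T [::].
Proof. by case: T_perfect => -[[s /(tree_take 0)]]; rewrite take0. Qed.

Lemma tree_child s : T s -> exists b, T (rcons s b).
Proof.
case: T_perfect => _ /[apply] -[[|b u] [Tu _]]; first by exists false; rewrite -cats1.
by exists b; move: Tu; rewrite /= -cat1s catA cats1 => /tree_prefix.
Qed.

Lemma nonsplitting_childE s b : T (rcons s b) -> ~~ splitting s ->
  holds (T (rcons s true)) = b.
Proof. by rewrite /splitting; case: b => /holdsP->; case: holdsP. Qed.

Lemma node_in_tree a i : T (node a i).
Proof.
elim: i => [|i IH]; first exact: tree_nil.
rewrite nodeS /bit /next_bit; case: ifP => [/andP[/andP[/holdsP T0 /holdsP T1] _]|_].
  by case: (a _).
by case: holdsP => // notT1; case: (tree_child IH) => -[] // /notT1.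
Qed.

Lemma node_onto : (forall c, H c = 0) -> forall s, T s -> exists a, node a (size s) = s.
Proof.
move=> H0; elim/last_ind => [|s b IH] Tsb; first by exists (fun _ => false).
have [a Ea] : exists a, node a (size s) = s.
  by apply: IH; apply: (@tree_prefix _ [:: b]); rewrite cats1.
rewrite size_rcons; case Sp: (splitting s).
  pose a' : assignment := fun k => if k == used a (size s) then b else a k.
  have Ew : walk a' (size s) = walk a (size s).
    by symmetry; apply: walk_depends => k lt; rewrite /a' (ltn_eqF lt).
  exists a'; rewrite nodeS /node Ew -/(node a _) /bit /next_bit Ew readyE Ea Sp H0 /=.
  by rewrite -/(used a _) /a' eqxx.
exists a; rewrite nodeS /bit /next_bit readyE Ea Sp /= -/(node a _) Ea.
by rewrite (nonsplitting_childE Tsb) ?Sp.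
Qed.

Lemma walk_follows a i u : H (used a i) <= i -> T (node a i ++ u) ->
  used a (i + size u) = used a i -> node a (i + size u) = node a i ++ u.
Proof.
move=> Hi; elim/last_ind: u => [|u b IH]; first by rewrite addn0 cats0.
rewrite size_rcons addnS -cats1 catA => Tub; set j := i + size u => Eu.
have Euj : used a j = used a i.
  by apply/anti_leq; rewrite -{1}Eu !used_mono ?leqnSn ?leq_addr.
have Ej := IH (tree_prefix Tub) Euj.
have notready : ~~ ready (walk a j).
  move: Eu; rewrite usedS Euj; case: ready => //.
  by rewrite addn1 => /eqP; rewrite eqn_leq ltnn.
rewrite nodeS Ej cats1; congr rcons; rewrite /bit /next_bit (negbTE notready).
apply: nonsplitting_childE; first by rewrite -/(node a j) Ej -cats1.
by move: notready; rewrite readyE Euj (leq_trans Hi (leq_addr _ _)) andbT.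
Qed.

(* Past depth [H c] the walk follows the path of [T] to the next splitting node,
   where it consumes a new bit. *)
Lemma used_grows a i : exists i', used a i < used a i'.
Proof.
set c := used a i; set i1 := maxn i (H c).
have [lt|le] := ltnP c (used a i1); first by exists i1.
have E1 : used a i1 = c by apply/anti_leq; rewrite le used_mono // leq_maxl.
have Hi1 : H (used a i1) <= i1 by rewrite E1 leq_maxr.
have [u [T0 T1]] := proj2 T_perfect _ (node_in_tree a i1).
have [lt|le'] := ltnP c (used a (i1 + size u)); first by exists (i1 + size u).
have E2 : used a (i1 + size u) = used a i1.
  by apply/anti_leq; rewrite {1}E1 le' used_mono // leq_addr.
have En : node a (i1 + size u) = node a i1 ++ u.
  by apply: walk_follows E2 => //; move: T0; rewrite catA => /tree_prefix.
have R : ready (walk a (i1 + size u)).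
  rewrite readyE En E2 (leq_trans Hi1 (leq_addr _ _)) andbT.
  by rewrite /splitting -!cats1 -!catA; apply/andP; split; apply/holdsP.
by exists (i1 + size u).+1; rewrite usedS R E2 E1 addn1.
Qed.

Lemma used_attains a c : exists i, used a i = c.
Proof.
elim: c => [|c [i Ei]]; first by exists 0.
have [i' lt] := used_grows a i; rewrite Ei in lt.
elim: i' lt => // i' IH; rewrite usedS.
have [/IH //|le lt] := ltnP c (used a i').
exists i'.+1; apply/anti_leq; rewrite usedS lt andbT -addn1 leq_add ?leq_b1 //.
Qed.

(* Until [x_j] is consumed only [x_0, ..., x_j] matter, and they take finitely
   many values. *)
Lemma used_uniform j : exists P, forall a, j < used a P.
Proof.
have ex a : exists i, used a i == j.+1 by have [i /eqP] := used_attains a j.+1; exists i.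
pose t (r : (j.+1).-tuple bool) := ex_minn (ex (nth false r)).
have tE (r : (j.+1).-tuple bool) : used (nth false r) (t r) = j.+1.
  by rewrite /t; case: ex_minnP => i /eqP.
exists (\max_r t r) => a; pose r := [tuple of map a (iota 0 j.+1)].
have Ew : walk a (t r) = walk (nth false r) (t r).
  symmetry; apply: walk_depends => k; rewrite tE => lt.
  by rewrite (nth_map 0) ?size_iota ?nth_iota.
have : j < used a (t r) by rewrite /used Ew -/(used _ _) tE.
by move/leq_trans; apply; apply: used_mono; apply: leq_bigmax.
Qed.

Lemma used_delayed a c i : i <= H c.+1 -> used a i <= c.+1.
Proof.
elim: i => // i IH lt; have := IH (ltnW lt); rewrite usedS readyE.
rewrite leq_eqVlt => /predU1P[->|lt'].
  by rewrite (leqNgt (H _)) lt andbF addn0.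
by rewrite -addn1 leq_add ?leq_b1.
Qed.

Lemma node_determines_bit j : exists P, forall a b, node a P = node b P -> a j = b j.
Proof.
have [P HP] := used_uniform j; exists P => a b /node_eq_agree[_ agree].
exact/agree/HP.
Qed.

Definition walk_terms (i : nat) : term := term_of_fun i (bit^~ i).

Lemma teval_walk_terms a i : teval (walk_terms i) a = bit a i.
Proof. exact/teval_term_of_fun/bit_depends. Qed.

Lemma restr_eval_walk_terms a n : restr_eval walk_terms a n = node a n.
Proof. by rewrite node_map; apply: eq_map => i; apply: teval_walk_terms. Qed.

Lemma walk_terms_Sstar : in_Sstar walk_terms.
Proof.
split=> [i|j]; first exact: term_of_fun_depends.
have [P detP] := node_determines_bit j; exists (iota 0 P) => a b ab; apply: detP.
rewrite -!restr_eval_walk_terms; apply/restr_eval_eqP => i lt.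
by apply: ab; rewrite mem_iota add0n.
Qed.

Lemma Psi_walk_terms : (forall c, H c = 0) -> forall s, Psi walk_terms s <-> T s.
Proof.
move=> H0 s; split=> [[n [a ->]]|Ts].
  by rewrite restr_eval_walk_terms; apply: node_in_tree.
by have [a Ea] := node_onto H0 Ts; exists (size s), a; rewrite restr_eval_walk_terms.
Qed.

Section Pullback.
Variables (ts : nat -> term) (N : nat -> nat).
Hypothesis ts_depends : forall i, depends_only (ts i) (fun j => j <= i).
Hypothesis T_sub : forall s, T s -> Psi ts s.
Hypothesis N_determines : forall c, determined_by c ts (iota 0 (N c)).
Hypothesis N_delay : forall c, N c <= H c.+1.

(* [x_c] is read off any assignment whose [ts]-values spell [node a (N c)];
   [N_delay] makes the result depend on [x_0, ..., x_c] only. *)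
Definition pullback_bit c (a : assignment) : bool :=
  epsilon (inhabits (fun _ : nat => false))
    (fun b : assignment => restr_eval ts b (N c) = node a (N c)) c.

Lemma pullback_bitE c a b : restr_eval ts b (N c) = node a (N c) -> pullback_bit c a = b c.
Proof.
move=> Eb; rewrite /pullback_bit; set e := epsilon _ _.
have /restr_eval_eqP agree : restr_eval ts e (N c) = restr_eval ts b (N c).
  rewrite Eb; apply: (epsilon_spec _ (fun b => restr_eval ts b (N c) = node a (N c))).
  by exists b.
by apply: N_determines => i; rewrite mem_iota add0n => /agree.
Qed.

Lemma pullback_bit_depends c : depends_below (pullback_bit c) c.
Proof.
move=> a b ab; rewrite /pullback_bit /node (walk_depends (b := b)) // => k lt.
by apply: ab; rewrite -ltnS (leq_trans lt (used_delayed _ (N_delay c))).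
Qed.

Definition pullback_terms (c : nat) : term := term_of_fun c (pullback_bit c).

Lemma teval_pullback_terms a c : teval (pullback_terms c) a = pullback_bit c a.
Proof. exact/teval_term_of_fun/pullback_bit_depends. Qed.

Lemma teval_ts_pullback a i : teval (ts i) (fun c => pullback_bit c a) = bit a i.
Proof.
pose m := maxn i.+1 (\max_(c < i.+1) N c).
have [m' [b Eb]] := T_sub (node_in_tree a m).
have Em : m' = m by rewrite -(size_node a m) Eb size_restr_eval.
have tsb k : k < m -> teval (ts k) b = bit a k.
  move: Eb; rewrite Em -restr_eval_walk_terms => /esym/restr_eval_eqP agree lt.
  by rewrite agree // teval_walk_terms.
rewrite -tsb ?leq_maxl //; apply: teval_depends (ts_depends i) _ => c ci.
have Nc : N c <= m.
  have ci' : c < i.+1 by [].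
  exact: leq_trans (@leq_bigmax _ (fun c : 'I_i.+1 => N c) (Ordinal ci')) (leq_maxr _ _).
apply: pullback_bitE; rewrite -restr_eval_walk_terms; apply/restr_eval_eqP => k lt.
by rewrite tsb ?teval_walk_terms // (leq_trans lt Nc).
Qed.

Lemma pullback_Sstar : in_Sstar pullback_terms.
Proof.
split=> [i|j]; first exact: term_of_fun_depends.
have [P detP] := node_determines_bit j; exists (iota 0 P) => a a' aa'; apply: detP.
rewrite !node_map; apply/eq_in_map => i; rewrite mem_iota add0n => /andP[_ lt].
rewrite -!teval_ts_pullback; apply: teval_depends (ts_depends i) _ => k ki.
by rewrite -!teval_pullback_terms aa' // mem_iota add0n (leq_ltn_trans ki lt).
Qed.

Lemma walk_terms_le : Sstar_le walk_terms ts.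
Proof.
exists pullback_terms; split=> [|i a]; first exact: pullback_Sstar.
rewrite teval_tsubst teval_walk_terms -teval_ts_pullback.
by apply: teval_depends (ts_depends i) _ => k _; rewrite teval_pullback_terms.
Qed.

End Pullback.
End Walk.

Lemma Psi_onto T : perfect_tree T -> exists ts, in_Sstar ts /\ forall s, Psi ts s <-> T s.
Proof.
move=> T_perfect; exists (walk_terms T (fun _ => 0)).
by split; [apply: walk_terms_Sstar | apply: Psi_walk_terms].
Qed.

Lemma determined_by_iota j ts F :
  determined_by j ts F -> determined_by j ts (iota 0 (\max_(i <- F) i).+1).
Proof.
move=> detF a b ab; apply: detF => i Fi; apply: ab.
by rewrite mem_iota add0n ltnS (@leq_bigmax_seq _ F xpredT id i Fi).
Qed.

Lemma Sstar_modulus ts :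
  in_Sstar ts -> exists N, forall c, determined_by c ts (iota 0 (N c)).
Proof.
move=> [_ ts_det]; apply: (choice (fun c n => determined_by c ts (iota 0 n))) => c.
by have [F /determined_by_iota det] := ts_det c; exists (\max_(i <- F) i).+1.
Qed.

Lemma Psi_incompatible ts ts' : in_Sstar ts -> in_Sstar ts' ->
  Sstar_incompatible ts ts' -> Sacks_incompatible (Psi ts) (Psi ts').
Proof.
move=> ts_S ts'_S incompat [T [T_perfect [T_ts T_ts']]]; apply: incompat.
have [N N_det] := Sstar_modulus ts_S; have [N' N'_det] := Sstar_modulus ts'_S.
pose H c := if c is c'.+1 then maxn (N c') (N' c') else 0.
exists (walk_terms T H); split; first exact: walk_terms_Sstar.
split; apply: walk_terms_le => //; [exact: ts_S.1 | | exact: ts'_S.1 | ].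
- by move=> c; apply: leq_maxl.
- by move=> c; apply: leq_maxr.
Qed.

Theorem mainTheorem2 :
  (forall ts, in_Sstar ts -> perfect_tree (Psi ts)) /\
  (forall T, perfect_tree T ->
     exists ts, in_Sstar ts /\ forall s, Psi ts s <-> T s) /\
  (forall ts ts', in_Sstar ts -> in_Sstar ts' ->
     Sstar_le ts' ts -> Sacks_le (Psi ts') (Psi ts)) /\
  (forall ts ts', in_Sstar ts -> in_Sstar ts' ->
     Sstar_incompatible ts ts' -> Sacks_incompatible (Psi ts) (Psi ts')).
Proof.
split; first exact: Psi_perfect.
split; first exact: Psi_onto.
split; last exact: Psi_incompatible.
by move=> ts ts' _ _; apply: Psi_mono.
Qed.
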